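(* Let $\mathcal{A}\subseteq\mathcal{B}$ be sub-$\sigma$-algebras of a complete probability space $(\Omega,\mathcal{F},P)$. Let $x:L_\infty(\mathcal{B})\to L_\infty(\mathcal{A})$ be a linear operator such that \[x(X)\le M(Y)\qquad\text{for all } X\in L_\infty(\mathcal{B}),\ Y\in L^+_\infty(\mathcal{B}) \text{ with } X\le Y,\] for some sublinear operator $M:L^+_\infty(\mathcal{B})\to L^+_\infty(\mathcal{A})$. Then $x$ is monotone. Moreover: (i) if $M$ is weak $\mathcal{A}$-homogeneous, then $x$ is weak $\mathcal{A}$-homogeneous; (ii) if $M$ is regular, then $x$ is continuous from above.
   Context: All (in)equalities hold $P$-a.s. Sublinear: $M(X+Y)\le M(X)+M(Y)$, $M(\lambda X)=\lambda M(X)$ for real $\lambda\ge0$. Weak $\mathcal{A}$-homogeneous: $T(1_AX)=1_AT(X)$ for every $A\in\mathcal{A}$ and every $X$ in the domain of the operator $T$. Regular: for every nonincreasing sequence $X_n\downarrow0$ $P$-a.s., $M(X_n)\to0$ $P$-a.s. Continuous from above: for every nonincreasing sequence $X_n$ with $P$-a.s. limit $X$, $x(X_n)\downarrow x(X)$ $P$-a.s. *)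

From HB Require Import structures.
From mathcomp Require Import all_boot all_order all_algebra.
From mathcomp Require Import all_classical all_reals all_analysis.
Set Implicit Arguments. Unset Strict Implicit. Unset Printing Implicit Defensive.
Import Order.TTheory GRing.Theory Num.Theory.
Import numFieldTopology.Exports numFieldNormedType.Exports.
Local Open Scope classical_set_scope.
Local Open Scope ring_scope.

Section Defs.
Context d (T : measurableType d) (R : realType) (P : probability T R).

Definition sub_sigma (G : set (set T)) : Prop :=
  sigma_algebra setT G /\ G `<=` measurable.

Definition Gmeasurable (G : set (set T)) (f : T -> R) : Prop :=
  forall U : set R, measurable U -> G (f @^-1` U).

(* representatives of elements of L_infty(G) : bounded G-measurable functions *)
Definition Linf (G : set (set T)) (f : T -> R) : Prop :=
  Gmeasurable G f /\ exists c : R, forall w, `|f w| <= c.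

Definition Linfp (G : set (set T)) (f : T -> R) : Prop :=
  Linf G f /\ {ae P, forall w, 0 <= f w}.

Definition aseq (f g : T -> R) : Prop := {ae P, forall w, f w = g w}.
Definition asle (f g : T -> R) : Prop := {ae P, forall w, f w <= g w}.

(* An operator from L_infty-classes over dom to L_infty-classes over codomain
   Linf A, given on representatives and respecting P-a.s. equality. *)
Definition well_def_op (dom cod : (T -> R) -> Prop) (F : (T -> R) -> (T -> R)) :=
  (forall X, dom X -> cod (F X)) /\
  (forall X Y, dom X -> dom Y -> aseq X Y -> aseq (F X) (F Y)).

Definition linear_op (dom : (T -> R) -> Prop) (F : (T -> R) -> (T -> R)) :=
  (forall X Y, dom X -> dom Y -> aseq (F (X \+ Y)) (F X \+ F Y)) /\
  (forall (c : R) X, dom X -> aseq (F (fun w => c * X w)) (fun w => c * F X w)).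

Definition sublinear_op (dom : (T -> R) -> Prop) (F : (T -> R) -> (T -> R)) :=
  (forall X Y, dom X -> dom Y -> asle (F (X \+ Y)) (F X \+ F Y)) /\
  (forall (c : R) X, 0 <= c -> dom X ->
     aseq (F (fun w => c * X w)) (fun w => c * F X w)).

Definition monotone_op (dom : (T -> R) -> Prop) (F : (T -> R) -> (T -> R)) :=
  forall X Y, dom X -> dom Y -> asle X Y -> asle (F X) (F Y).

Definition weak_homogeneous (A : set (set T)) (dom : (T -> R) -> Prop)
    (F : (T -> R) -> (T -> R)) :=
  forall S X, A S -> dom X ->
    aseq (F (fun w => \1_S w * X w)) (fun w => \1_S w * F X w).

Definition regular_op (dom : (T -> R) -> Prop) (F : (T -> R) -> (T -> R)) :=
  forall X : nat -> T -> R, (forall n, dom (X n)) ->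
    {ae P, forall w, (forall n, X n.+1 w <= X n w) /\ (fun n => X n w) @ \oo --> (0 : R)} ->
    {ae P, forall w, (fun n => F (X n) w) @ \oo --> (0 : R)}.

Definition cont_above_op (dom : (T -> R) -> Prop) (F : (T -> R) -> (T -> R)) :=
  forall (X : nat -> T -> R) (Xl : T -> R), (forall n, dom (X n)) -> dom Xl ->
    {ae P, forall w, (forall n, X n.+1 w <= X n w) /\ (fun n => X n w) @ \oo --> (Xl w : R)} ->
    {ae P, forall w, (forall n, F (X n.+1) w <= F (X n) w) /\
                     (fun n => F (X n) w) @ \oo --> (F Xl w : R)}.
End Defs.

From HB Require Import structures.
From mathcomp Require Import all_boot all_order all_algebra.
From mathcomp Require Import all_classical all_reals all_analysis.
From mathcomp Require Import measurable_realfun.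
Set Implicit Arguments. Unset Strict Implicit. Unset Printing Implicit Defensive.
Import Order.TTheory GRing.Theory Num.Theory.
Import numFieldTopology.Exports numFieldNormedType.Exports.
Local Open Scope classical_set_scope.
Local Open Scope ring_scope.

(* If X <= Y then x X - x Y = x (X - Y) <= M 0 = 0, so x is monotone.  If M is
   A-homogeneous and |Z| <= 1_S c, then +-x Z <= M (1_S c) = 1_S M c, so x Z
   vanishes off S; splitting X = 1_S X + 1_(~S) X gives the A-homogeneity of x.
   If M is regular and X_n decreases to X, then
   0 <= x X_n - x X = x (X_n - X) <= M (X_n - X) --> 0. *)

Section Linf_closure.
Context d (T : measurableType d) (R : realType) (B : set (set T)).
Hypothesis sigmaB : sigma_algebra setT B.

Let measurable_gB : (measurable : set (set (g_sigma_algebraType B))) = B.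
Proof. by rewrite /measurable /= sigma_algebra_id. Qed.

(* [g_sigma_algebraType B] carries exactly the sigma-algebra [B], which gives
   access to the library's closure lemmas for measurable functions. *)
Lemma GmeasurableP (f : T -> R) :
  Gmeasurable B f <-> measurable_fun (setT : set (g_sigma_algebraType B)) f.
Proof.
split=> [Bf _ U mU | mf U mU]; first by rewrite setTI measurable_gB; exact: Bf.
by have := mf measurableT U mU; rewrite setTI measurable_gB.
Qed.

Lemma Linf_cst (c : R) : Linf B (cst c).
Proof. by split; [apply/GmeasurableP; exact: measurable_cst | exists `|c|]. Qed.

Lemma Linf_add (f g : T -> R) : Linf B f -> Linf B g -> Linf B (f \+ g).
Proof.
move=> [/GmeasurableP mf [cf bf]] [/GmeasurableP mg [cg bg]].
split; first exact/GmeasurableP/measurable_funD.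
by exists (cf + cg) => w; rewrite (le_trans (ler_normD _ _)) ?lerD.
Qed.

Lemma Linf_scale (c : R) (f : T -> R) : Linf B f -> Linf B (fun w => c * f w).
Proof.
move=> [/GmeasurableP mf [cf bf]].
split; first exact/GmeasurableP/measurable_funM.
by exists (`|c| * cf) => w; rewrite normrM ler_wpM2l.
Qed.

Lemma Linf_indic (S : set T) (f : T -> R) :
  B S -> Linf B f -> Linf B (fun w => \1_S w * f w).
Proof.
move=> BS [/GmeasurableP mf [cf bf]]; split.
  apply/GmeasurableP/measurable_funM => //.
  by apply: measurable_indic; rewrite measurable_gB.
exists cf => w; rewrite indicE; case: (w \in S); rewrite ?mul1r ?mul0r //.
by rewrite normr0 (le_trans _ (bf w)).
Qed.

Lemma Linf_sub (f g : T -> R) : Linf B f -> Linf B g -> Linf B (f \- g).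
Proof.
move=> Lf Lg; have := Linf_add Lf (Linf_scale (-1) Lg).
by congr Linf; apply/funext => w /=; rewrite mulN1r.
Qed.

End Linf_closure.

Lemma Linfp_nonneg d (T : measurableType d) (R : realType) (P : probability T R)
    (B : set (set T)) (f : T -> R) :
  Linf B f -> (forall w, 0 <= f w) -> Linfp P B f.
Proof. by move=> Lf f_ge0; split => //; exact: aeW. Qed.

Section ae_operators.
Context d (T : measurableType d) (R : realType) (P : probability T R).
Variables (dom : (T -> R) -> Prop) (F : (T -> R) -> (T -> R)).

Lemma sublinear_op_cst0 : sublinear_op P dom F -> dom (cst 0) ->
  aseq P (F (cst 0)) (cst 0).
Proof.
move=> [_ F_homo] dom0; have := F_homo 0 (cst 0) (lexx _) dom0.
have -> : (fun w => 0 * cst 0 w) = cst 0 :> (T -> R).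
  by apply/funext => w; rewrite mul0r.
by apply: filterS => w ->; rewrite mul0r.
Qed.

Hypothesis F_linear : linear_op P dom F.

Lemma linear_op_cst0 : dom (cst 0) -> aseq P (F (cst 0)) (cst 0).
Proof.
move=> dom0; have := F_linear.2 0 (cst 0) dom0.
have -> : (fun w => 0 * cst 0 w) = cst 0 :> (T -> R).
  by apply/funext => w; rewrite mul0r.
by apply: filterS => w ->; rewrite mul0r.
Qed.

Lemma linear_op_opp (X : T -> R) : dom X ->
  aseq P (F (fun w => -1 * X w)) (fun w => - F X w).
Proof. by move=> domX; apply: filterS (F_linear.2 (-1) _ domX) => w ->; rewrite mulN1r. Qed.

Lemma linear_op_sub (X Y : T -> R) : dom X -> dom Y -> dom (fun w => -1 * Y w) ->
  aseq P (F (X \- Y)) (F X \- F Y).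
Proof.
move=> domX domY domNY.
have -> : X \- Y = X \+ (fun w => -1 * Y w) by apply/funext => w; rewrite /= mulN1r.
by apply: filterS2 (F_linear.1 _ _ domX domNY) (linear_op_opp domY) => w /= -> ->.
Qed.

End ae_operators.

Section dominated_linear_operator.
Context d (T : measurableType d) (R : realType) (P : probability T R).
Variables (B : set (set T)) (x M : (T -> R) -> (T -> R)).
Hypotheses (sigmaB : sigma_algebra setT B)
  (x_linear : linear_op P (Linf B) x)
  (M_sublinear : sublinear_op P (Linfp P B) M)
  (x_le_M : forall X Y, Linf B X -> Linfp P B Y -> asle P X Y -> asle P (x X) (M Y)).

Let Linf0 : Linf B (cst 0 : T -> R) := Linf_cst sigmaB 0.
Let Linfp0 : Linfp P B (cst 0 : T -> R) := Linfp_nonneg P Linf0 (fun=> lexx 0).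

Let x_sub (X Y : T -> R) : Linf B X -> Linf B Y -> aseq P (x (X \- Y)) (x X \- x Y).
Proof. by move=> LX LY; apply: (linear_op_sub x_linear) => //; exact: Linf_scale. Qed.

Lemma dominated_monotone : monotone_op P (Linf B) x.
Proof.
move=> X Y LX LY XY.
have XY0 : asle P (X \- Y) (cst 0) by apply: filterS XY => w; rewrite /= subr_le0.
apply: filterS3 (x_le_M (Linf_sub sigmaB LX LY) Linfp0 XY0)
  (sublinear_op_cst0 M_sublinear Linfp0) (x_sub LX LY) => w xXY_le M0 /= xXY.
by rewrite -subr_le0 -xXY (le_trans xXY_le) ?M0.
Qed.

Lemma dominated_bounds (Y : T -> R) : Linfp P B Y ->
  {ae P, forall w, 0 <= x Y w <= M Y w}.
Proof.
move=> [LY Y_ge0].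
apply: filterS3 (linear_op_cst0 x_linear Linf0)
  (dominated_monotone Linf0 LY Y_ge0) (x_le_M LY (conj LY Y_ge0) (aeW P (fun w => lexx _))).
by move=> w /= -> -> ->.
Qed.

Section weak_homogeneity.
Variable A : set (set T).
Hypotheses (sigmaA : sigma_algebra setT A) (AB : A `<=` B)
  (M_homogeneous : weak_homogeneous P A (Linfp P B) M).

Lemma dominated_vanishes_off (S : set T) (Z : T -> R) (c : R) :
  A S -> Linf B Z -> 0 <= c -> (forall w, `|Z w| <= \1_S w * c) ->
  aseq P (x Z) (fun w => \1_S w * x Z w).
Proof.
move=> AS LZ c_ge0 Z_le.
have LpSc : Linfp P B (fun w => \1_S w * cst c w).
  apply: Linfp_nonneg; first exact: Linf_indic (AB AS) (Linf_cst sigmaB c).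
  by move=> w; rewrite indicE mulr_ge0.
have xZ_le := x_le_M LZ LpSc (aeW P (fun w => le_trans (ler_norm _) (Z_le w))).
have NZ_le : asle P (fun w => -1 * Z w) (fun w => \1_S w * cst c w).
  by apply: (aeW P) => w; rewrite mulN1r (le_trans _ (Z_le w)) // -normrN ler_norm.
have NxZ_le : asle P (fun w => - x Z w) (M (fun w => \1_S w * cst c w)).
  apply: filterS2 (x_le_M (Linf_scale sigmaB (-1) LZ) LpSc NZ_le)
    (linear_op_opp x_linear LZ) => w.
  by move=> + <-.
have MSc := M_homogeneous AS (Linfp_nonneg P (Linf_cst sigmaB c) (fun=> c_ge0)).
apply: filterS3 xZ_le NxZ_le MSc => w /= xZ_lew NxZ_lew MScw.
move: xZ_lew NxZ_lew; rewrite MScw indicE.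
case: (w \in S) => /=; rewrite ?mul1r // !mul0r => xZ_le0.
by rewrite oppr_le0 => xZ_ge0; apply/le_anti/andP.
Qed.

Lemma dominated_weak_homogeneous : weak_homogeneous P A (Linf B) x.
Proof.
move=> S X AS LX; have [c X_le] := LX.2.
have AnS : A (~` S) by rewrite -setTD; case: sigmaA => _ + _; apply.
have indic_le S' w : `|\1_S' w * X w| <= \1_S' w * `|c|.
  rewrite normrM ger0_norm ?indicE // ler_wpM2l ?indicE //.
  exact: le_trans (X_le w) (ler_norm _).
have LSX := Linf_indic sigmaB (AB AS) LX.
have LnSX := Linf_indic sigmaB (AB AnS) LX.
have X_split : X = (fun w => \1_S w * X w) \+ (fun w => \1_(~` S) w * X w).
  apply/funext => w; rewrite /= !indicE in_setC.
  by case: (w \in S); rewrite /= ?mul1r ?mul0r ?addr0 ?add0r.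
rewrite [in X in aseq _ _ X]X_split.
apply: filterS3 (dominated_vanishes_off AS LSX (normr_ge0 c) (indic_le S))
  (dominated_vanishes_off AnS LnSX (normr_ge0 c) (indic_le _))
  (x_linear.1 _ _ LSX LnSX) => w /= xS xnS ->.
rewrite mulrDr -xS xnS mulrA !indicE in_setC.
by case: (w \in S); rewrite /= ?mul1r ?mul0r ?addr0.
Qed.

End weak_homogeneity.

Lemma dominated_cont_above : regular_op P (Linfp P B) M -> cont_above_op P (Linf B) x.
Proof.
move=> M_regular X Xl LX LXl X_cvg.
pose Y n := X n \- Xl.
have Xl_le : {ae P, forall w n, Xl w <= X n w}.
  apply: filterS X_cvg => w [X_dec X_cvgw] n.
  rewrite -(cvg_lim _ X_cvgw) //; apply: nonincreasing_cvgn_ge.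
    exact/nonincreasing_seqP.
  by apply/cvg_ex; exists (Xl w).
have LpY n : Linfp P B (Y n).
  split; first exact: Linf_sub.
  by apply: filterS Xl_le => w /(_ n); rewrite /= subr_ge0.
have Y_cvg0 : {ae P, forall w, (forall n, Y n.+1 w <= Y n w) /\
    (fun n => Y n w) @ \oo --> (0 : R)}.
  apply: filterS X_cvg => w [X_dec X_cvgw]; split => [n|]; first by rewrite lerD2r.
  by rewrite -(subrr (Xl w)); apply: cvgB => //; exact: cvg_cst.
have x_dec : {ae P, forall w n, x (X n.+1) w <= x (X n) w}.
  apply: ae_foralln => n; apply: dominated_monotone => //.
  by apply: filterS X_cvg => w [X_dec _].
have xY : {ae P, forall w n, x (X n) w = x (Y n) w + x Xl w /\ 0 <= x (Y n) w <= M (Y n) w}.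
  apply: ae_foralln => n; apply: filterS2 (x_sub (LX n) LXl) (dominated_bounds (LpY n)).
  by move=> w /= -> ?; rewrite subrK.
apply: filterS3 x_dec xY (M_regular Y LpY Y_cvg0) => w x_decw xYw MY_cvg0.
split => //; have -> : (fun n => x (X n) w) = (fun n => x (Y n) w + x Xl w).
  by apply/funext => n; case: (xYw n).
rewrite -[X in _ --> X]add0r; apply: cvgD; last exact: cvg_cst.
apply: (squeeze_cvgr _ (cvg_cst 0) MY_cvg0).
by apply: nearW => n; case: (xYw n).
Qed.

End dominated_linear_operator.

Theorem proposition3p8 (d : measure_display) (T : measurableType d) (R : realType)
  (P : probability T R) (HP : measure_is_complete P)
  (A B : set (set T)) (HA : sub_sigma A) (HB : sub_sigma B) (HAB : A `<=` B)
  (x M : (T -> R) -> (T -> R))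
  (Hx : well_def_op P (Linf B) (Linf A) x) (Hxlin : linear_op P (Linf B) x)
  (HM : well_def_op P (Linfp P B) (Linfp P A) M)
  (HMsub : sublinear_op P (Linfp P B) M)
  (HxM : forall X Y, Linf B X -> Linfp P B Y -> asle P X Y -> asle P (x X) (M Y)) :
  monotone_op P (Linf B) x /\
  (weak_homogeneous P A (Linfp P B) M -> weak_homogeneous P A (Linf B) x) /\
  (regular_op P (Linfp P B) M -> cont_above_op P (Linf B) x).
Proof.
split; first exact: dominated_monotone HB.1 Hxlin HMsub HxM.
split; first exact (dominated_weak_homogeneous HB.1 Hxlin HxM HA.1 HAB).
exact: dominated_cont_above HB.1 Hxlin HMsub HxM.
Qed.
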